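(* Let $r<0$ and $0<y_1<y_2$, and let $p(z)=\prod_{j=1}^2(z-(r+iy_j))(z-(r-iy_j))$. Then $(1/p(n))_{n\in\mathbb Z_+}$ is not a Hausdorff moment sequence.
   Context: A sequence $(x_n)_{n\in\mathbb Z_+}$ of positive numbers is a Hausdorff moment sequence if there is a positive Radon measure $\mu$ on $[0,1]$ with $x_n=\int_0^1 t^n\,d\mu(t)$ for all $n\in\mathbb Z_+$. *)

From HB Require Import structures.
From mathcomp Require Import all_boot all_order all_algebra.
From mathcomp Require Import all_classical all_reals all_analysis.
Set Implicit Arguments. Unset Strict Implicit. Unset Printing Implicit Defensive.
Import Order.TTheory GRing.Theory Num.Theory.
Local Open Scope classical_set_scope.
Local Open Scope ring_scope.

(* On the compact [0,1] every finite
   positive Borel measure is Radon, and finiteness follows from n = 0. *)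
Definition hausdorff_moment_seq (R : realType) (x : nat -> R) : Prop :=
  (forall n, 0 < x n) /\
  exists mu : {measure set R -> \bar R},
    mu (~` `[0%R, 1%R]) = 0%E /\
    forall n : nat, (\int[mu]_(t in `[0%R, 1%R]) ((t ^+ n)%:E) = (x n)%:E)%E.

From mathcomp Require Import all_boot all_order all_algebra.
From mathcomp Require Import all_classical all_reals all_analysis.
From mathcomp Require Import measurable_realfun complex.
From mathcomp Require Import ring lra.
Import Order.TTheory GRing.Theory Num.Theory numFieldNormedType.Exports.
Local Open Scope ring_scope.

(* A Hausdorff moment sequence x is completely monotone: its j-th forward
   difference at k is the integral of t^k (1 - t)^j, hence nonnegative.  By
   partial fractions, 1/p(n) is a positive multiple of
   Im (1/(n - w1)) / y1 - Im (1/(n - w2)) / y2 with w_l = r + i y_l, and the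
   j-th difference of 1/(n - w) is j!/((k - w) ... (k + j - w)).  Its sign is
   that of sin (sum_i atan (y / (k + i - r))).  For large k the summands are
   small but still sum to infinity like the harmonic series, so for y = y1
   the angle can be steered close to 3 pi / 2; then the y1 term dominates and
   the forward difference of 1/p is negative. *)

Fixpoint fwd_diff {V : zmodType} (j : nat) (f : nat -> V) : nat -> V :=
  if j is j'.+1 then fun k => fwd_diff j' f k - fwd_diff j' f k.+1 else f.

Lemma eq_fwd_diff {V : zmodType} {f g : nat -> V} :
  f =1 g -> forall j, fwd_diff j f =1 fwd_diff j g.
Proof. by move=> fg; elim=> [|j IH] k //=; rewrite !IH. Qed.

Lemma fwd_diff_morph {U V : zmodType} (h : U -> V) :
  {morph h : a b / a - b} -> forall (f : nat -> U) j k,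
  h (fwd_diff j f k) = fwd_diff j (h \o f) k.
Proof. by move=> hB f; elim=> [|j IH] k //=; rewrite hB !IH. Qed.

Lemma fwd_diffB {V : zmodType} (f g : nat -> V) j k :
  fwd_diff j (fun n => f n - g n) k = fwd_diff j f k - fwd_diff j g k.
Proof. by elim: j k => [|j IH] k //=; rewrite !IH !opprD addrACA. Qed.

Section HausdorffMoments.
Context {R : realType} {mu : {measure set R -> \bar R}} {x : nat -> R}.
Hypothesis mu_moments :
  forall n, (\int[mu]_(t in `[0%R, 1%R]) (t ^+ n)%:E = (x n)%:E)%E.

Let I01 := (`[0%R, 1%R] : set R).

Lemma bernstein_ge0 (j k : nat) (t : R) :
  t \in `[0, 1] -> 0 <= t ^+ k * (1 - t) ^+ j.
Proof.
by rewrite in_itv /= => /andP[t0 t1]; rewrite mulr_ge0 ?exprn_ge0 ?subr_ge0.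
Qed.

Lemma moment_fwd_diff j k :
  (\int[mu]_(t in I01) (t ^+ k * (1 - t) ^+ j)%:E = (fwd_diff j x k)%:E)%E.
Proof.
elim: j k => [|j IH] k /=.
  by under eq_integral do rewrite expr0 mulr1; exact: mu_moments.
have mI01 : measurable I01 by exact: measurable_itv.
have int_j m : mu.-integrable I01 (EFin \o (fun t => t ^+ m * (1 - t) ^+ j)).
  apply/integrableP; split.
    by apply/measurable_EFinP; apply: measurable_funM; apply: measurable_funX;
      [|apply: measurable_funB].
  under eq_integral => t /[!inE] /bernstein_ge0 t_ge0 do rewrite /= ger0_norm //.
  by rewrite IH ltry.
under eq_integral do rewrite exprS mulrBl mul1r mulrBr mulrA -exprSr EFinB.
by rewrite integralB_EFin // !IH.
Qed.

Lemma hausdorff_fwd_diff_ge0 j k : 0 <= fwd_diff j x k.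
Proof.
rewrite -lee_fin -moment_fwd_diff.
by apply: integral_ge0 => t /bernstein_ge0; rewrite lee_fin.
Qed.
End HausdorffMoments.

Lemma fwd_diff_inv_sub (F : fieldType) (w : F) :
  (forall m : nat, m%:R != w) -> forall j k,
  fwd_diff j (fun n => (n%:R - w)^-1) k = j`!%:R / \prod_(i < j.+1) ((k + i)%:R - w).
Proof.
move=> w_notnat; have nz m : m%:R - w != 0 by rewrite subr_eq0.
elim=> [|j IH] k /=; first by rewrite big_ord1 addn0 fact0 div1r.
set P := \prod_(i < j.+2) _; rewrite !IH.
set A := \prod_(i < j.+1) _; set B := \prod_(i < j.+1) _.
set a := k%:R - w; set b := (k + j.+1)%:R - w.
have P_Ab : P = A * b by rewrite /P big_ord_recr.
have P_aB : P = a * B.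
  by rewrite /P big_ord_recl addn0; congr (_ * _); apply: eq_bigr => i _; rewrite addSnnS.
have -> : j`!%:R / A = j`!%:R * b / P by rewrite P_Ab [A * b]mulrC invfM mulrA mulfK ?nz.
have -> : j`!%:R / B = j`!%:R * a / P by rewrite P_aB invfM mulrA mulfK ?nz.
rewrite -mulrBl -mulrBr (_ : b - a = j.+1%:R); last by rewrite /a /b natrD; ring.
by rewrite factS natrM [j.+1%:R * _]mulrC.
Qed.

Section PolarForm.
Local Open Scope complex_scope.
Context {R : realType}.

Definition cpolar (rh th : R) : R[i] := (rh * cos th) +i* (rh * sin th).

Lemma cpolarM (a b s t : R) : cpolar a s * cpolar b t = cpolar (a * b) (s + t).
Proof. by rewrite /cpolar; simpc; rewrite cosD sinD; congr (_ +i* _); ring. Qed.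

Lemma prod_cpolar (I : Type) (s : seq I) (rh th : I -> R) :
  \prod_(i <- s) cpolar (rh i) (th i) =
  cpolar (\prod_(i <- s) rh i) (\sum_(i <- s) th i).
Proof.
elim: s => [|i s IH]; last by rewrite !big_cons IH cpolarM.
by rewrite !big_nil /cpolar cos0 sin0 mul1r mulr0.
Qed.

Lemma Im_cpolarV (rh th : R) : 0 < rh -> complex.Im (cpolar rh th)^-1 = - sin th / rh.
Proof.
move=> rh_gt0; rewrite /= !exprMn -mulrDr cos2Dsin2 mulr1.
by field; rewrite gt_eqF.
Qed.

Lemma cpolar_atan (c y : R) : 0 < c ->
  cpolar (Num.sqrt (c ^+ 2 + y ^+ 2)) (atan (y / c)) = c +i* y.
Proof.
move=> c_gt0; set x := y / c.
have s_gt0 : 0 < Num.sqrt (1 + x ^+ 2) by rewrite sqrtr_gt0 ltr_pwDl ?sqr_ge0.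
have cos_x : cos (atan x) = (Num.sqrt (1 + x ^+ 2))^-1 by rewrite cos_atan.
have sin_x : sin (atan x) = x * cos (atan x).
  by rewrite -{2}(atanK x) /tan divfK // cos_x invr_eq0 gt_eqF.
have -> : Num.sqrt (c ^+ 2 + y ^+ 2) = c * Num.sqrt (1 + x ^+ 2).
  rewrite (_ : c ^+ 2 + y ^+ 2 = c ^+ 2 * (1 + x ^+ 2)); last by rewrite /x; field; rewrite gt_eqF.
  by rewrite sqrtrM ?sqr_ge0 // sqrtr_sqr gtr0_norm.
rewrite /cpolar sin_x cos_x mulrCA !mulfK ?gt_eqF //.
by rewrite /x divfK ?gt_eqF.
Qed.
End PolarForm.

Section InverseQuadratic.
Local Open Scope complex_scope.
Context {R : realType}.

(* Modulus and minus the argument of the Pochhammer product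
   (k - w) (k + 1 - w) ... (k + j - w), w = r + i y. *)
Definition poch_norm (r y : R) (k j : nat) : R :=
  \prod_(i < j.+1) Num.sqrt (((k + i)%:R - r) ^+ 2 + y ^+ 2).

Definition poch_angle (r y : R) (k j : nat) : R :=
  \sum_(i < j.+1) atan (y / ((k + i)%:R - r)).

Lemma complex_natrE (n : nat) : (n%:R : R[i]) = n%:R +i* 0.
Proof. by rewrite -(rmorph_nat (@real_complex R)). Qed.

Lemma poch_polar (r y : R) (k j : nat) : r < 0 ->
  \prod_(i < j.+1) ((k + i)%:R - (r +i* y)) =
  cpolar (poch_norm r y k j) (- poch_angle r y k j).
Proof.
move=> r_lt0; rewrite /poch_angle -sumrN -prod_cpolar; apply: eq_bigr => i _.
have c_gt0 : 0 < (k + i)%:R - r by rewrite subr_gt0 (lt_le_trans r_lt0).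
by rewrite -atanN -mulNr -[y ^+ 2]sqrrN cpolar_atan // complex_natrE; simpc.
Qed.

Lemma poch_norm_gt0 (r y : R) (k j : nat) : y != 0 -> 0 < poch_norm r y k j.
Proof.
move=> y_neq0; apply: prodr_gt0 => i _.
by rewrite sqrtr_gt0 ltr_wpDl ?sqr_ge0 ?exprn_even_gt0.
Qed.

Lemma fwd_diff_inv_quad (r y : R) : r < 0 -> y != 0 -> forall j k,
  fwd_diff j (fun n => ((n%:R - r) ^+ 2 + y ^+ 2)^-1) k =
  j`!%:R * sin (poch_angle r y k j) / (poch_norm r y k j * y).
Proof.
move=> r_lt0 y_neq0 j k.
have quad_Im n : ((n%:R - r) ^+ 2 + y ^+ 2)^-1 = complex.Im ((n%:R - (r +i* y))^-1) / y.
  by rewrite complex_natrE /=; simpc; rewrite sqrrN mulrAC divff // mul1r.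
have Im_natrM n (z : R[i]) : complex.Im (n%:R * z) = n%:R * complex.Im z.
  by case: z => a b; rewrite complex_natrE /=; ring.
rewrite (eq_fwd_diff quad_Im) -(fwd_diff_morph (fun z => complex.Im z / y)); last first.
  by move=> [a b] [c d]; rewrite -mulrBl.
have w_notnat m : m%:R != r +i* y.
  by rewrite complex_natrE; apply/eqP => -[_ y0]; rewrite -y0 eqxx in y_neq0.
rewrite fwd_diff_inv_sub //.
rewrite poch_polar // Im_natrM Im_cpolarV ?poch_norm_gt0 // sinN opprK.
by rewrite invfM !mulrA.
Qed.
End InverseQuadratic.

Section PhaseSteering.
Context {R : realType}.

Lemma atan_bounds {x : R} : 0 < x -> x / (1 + x ^+ 2) <= atan x <= x.
Proof.
move=> x_gt0.
have [|c /[!in_itv] /= /andP[c_gt0 c_lt]] :=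
  MVT x_gt0 (fun t _ => is_derive1_atan t).
  by apply: continuous_subspaceT => t; exact: continuous_atan.
rewrite atan0 !subr0 => ->.
have sq_gt0 : 0 < 1 + c ^+ 2 by rewrite ltr_pwDl ?sqr_ge0.
rewrite mulrC ler_pM2r // lef_pV2 ?posrE ?ltr_pwDl ?sqr_ge0 //.
rewrite lerD2l ler_piMl ?(ltW x_gt0) ?invf_le1 ?lerDl ?sqr_ge0 ?andbT //; nra.
Qed.

Lemma sum_near_target {a : nat -> R} {t d : R} : 0 <= t -> (forall i, a i < d) ->
  (exists n, t <= \sum_(i < n.+1) a i) -> exists n, `|\sum_(i < n.+1) a i - t| < d.
Proof.
move=> t_ge0 a_lt reach; case: (ex_minnP reach) => n t_le n_min; exists n.
rewrite ger0_norm ?subr_ge0 //.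
case: n t_le n_min => [|n] t_le n_min.
  by rewrite big_ord1; have := a_lt 0%N; lra.
have S_lt : \sum_(i < n.+1) a i < t by rewrite ltNge; apply/negP => /n_min; rewrite ltnn.
by rewrite big_ord_recr /=; have := a_lt n.+1; lra.
Qed.

Lemma harmonic_minorant_unbounded {a : nat -> R} {b : R} : 0 < b ->
  (forall i, b / i.+1%:R <= a i) -> forall t, exists n, t <= \sum_(i < n.+1) a i.
Proof.
move=> b_gt0 a_ge t.
have [//|/forallNP S_lt] := pselect (exists n, t <= \sum_(i < n.+1) a i).
exfalso; apply: (@dvg_harmonic R); apply: nondecreasing_is_cvgn.
  by apply: nondecreasing_series => n _ _; exact: harmonic_ge0.
exists (t / b) => _ [n _ <-].
rewrite seriesEord /= ler_pdivlMr // mulr_suml.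
apply: (@le_trans _ _ (\sum_(i < n.+1) a i)); last first.
  by move/negP: (S_lt n); rewrite -ltNge => /ltW.
rewrite big_ord_recr /= -[leLHS]addr0 lerD //.
  by apply: ler_sum => i _; rewrite mulrC; exact: a_ge.
by apply: le_trans (a_ge n); rewrite divr_ge0 ?ltW.
Qed.

Lemma atan_ge_half {x : R} : 0 < x <= 1 -> x / 2 <= atan x.
Proof.
move=> /andP[x_gt0 x_le1]; have /andP[atan_ge _] := atan_bounds x_gt0.
apply: le_trans atan_ge.
by rewrite ler_pM2l // lef_pV2 ?posrE ?ltr_pwDl ?sqr_ge0 // lerD2l; nra.
Qed.

Lemma exists_poch_angle (r y e : R) : r < 0 -> 0 < y -> e < 1 ->
  exists k j : nat, sin (poch_angle r y k j) < - e.
Proof.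
move=> r_lt0 y_gt0 e_lt1; pose t0 := pi / 2 + pi : R.
have t0_ge0 : 0 <= t0 by rewrite addr_ge0 ?divr_ge0 ?ltW ?pi_gt0.
have : \forall t \near t0, sin t < - e.
  apply: (@cvgr_lt _ _ (nbhs t0) _ sin (sin t0) (@continuous_sin R t0)).
  by rewrite /t0 sinDpi sin_pihalf ltrN2.
move=> /nbhs_ballP[d /= d_gt0 near_t0].
pose m := Num.min d 1; have m_gt0 : 0 < m by rewrite lt_min d_gt0 ltr01.
(* k is so large that every step atan (y / c i) is below m <= d, while the
   steps still dominate a harmonic series. *)
pose k := (Num.truncn (y / m)).+1; pose K := k%:R - r.
have k_gt : y < m * k%:R by rewrite mulrC -ltr_pdivrMr // truncnS_gt.
have K_ge1 : 1 <= K.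
  have : 1 <= k%:R :> R by rewrite ler1n.
  rewrite /K; lra.
pose c i := (k + i)%:R - r.
have c_eq i : c i = K + i%:R by rewrite /c /K natrD addrAC.
have c_gt0 i : 0 < c i by rewrite c_eq; have := ler0n R i; lra.
have x_lt_m i : y / c i < m.
  rewrite ltr_pdivrMr // (lt_le_trans k_gt) // ler_pM2l // c_eq /K.
  by have := ler0n R i; lra.
have step_lt i : atan (y / c i) < d.
  have /andP[_ atan_le] := atan_bounds (divr_gt0 y_gt0 (c_gt0 i)).
  by rewrite (le_lt_trans atan_le) // (lt_le_trans (x_lt_m i)) // ge_min lexx.
have b_gt0 : 0 < y / (2 * K) by rewrite divr_gt0 // mulr_gt0 //; lra.
have step_ge i : y / (2 * K) / i.+1%:R <= atan (y / c i).
  have x_in : 0 < y / c i <= 1.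
    by rewrite divr_gt0 //= ltW // (lt_le_trans (x_lt_m i)) // ge_min lexx orbT.
  apply: le_trans (atan_ge_half x_in).
  rewrite -!mulrA ler_pM2l // -!invfM lef_pV2 ?posrE ?mulr_gt0 //; try lra.
  by rewrite c_eq -natr1; have := ler0n R i; nra.
have [n near_n] :=
  sum_near_target t0_ge0 step_lt (harmonic_minorant_unbounded b_gt0 step_ge t0).
by exists k, n; apply: near_t0; rewrite -ball_normE /ball_ /= distrC.
Qed.
End PhaseSteering.

Lemma inv_mul_partial_fraction {F : fieldType} {c s t : F} :
  c + s != 0 -> c + t != 0 -> s != t ->
  1 / ((c + s) * (c + t)) = (t - s)^-1 * ((c + s)^-1 - (c + t)^-1).
Proof. by move=> cs_neq0 ct_neq0 st; field; rewrite cs_neq0 ct_neq0 subr_eq0 eq_sym st. Qed.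

Section TwoQuadratics.
Context {R : realType}.

Lemma le_poch_norm (r y1 y2 : R) (k j : nat) :
  y1 ^+ 2 <= y2 ^+ 2 -> poch_norm r y1 k j <= poch_norm r y2 k j.
Proof.
move=> le_y; apply: ler_prod => i _.
by rewrite sqrtr_ge0 ler_sqrt ?lerD2l // addr_ge0 ?sqr_ge0.
Qed.

Lemma fwd_diff_inv_two_quads (r y1 y2 : R) : r < 0 -> 0 < y1 -> y1 < y2 -> forall j k,
  fwd_diff j (fun n => 1 / (((n%:R - r) ^+ 2 + y1 ^+ 2) * ((n%:R - r) ^+ 2 + y2 ^+ 2))) k =
  (y2 ^+ 2 - y1 ^+ 2)^-1 * j`!%:R *
  (sin (poch_angle r y1 k j) / (poch_norm r y1 k j * y1) -
   sin (poch_angle r y2 k j) / (poch_norm r y2 k j * y2)).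
Proof.
move=> r_lt0 y1_gt0 y12 j k; have y2_gt0 := lt_trans y1_gt0 y12.
have quad_gt0 y n : 0 < y -> 0 < (n%:R - r) ^+ 2 + y ^+ 2.
  by move=> y_gt0; rewrite ltr_wpDl ?sqr_ge0 ?exprn_gt0.
have sq_lt : y1 ^+ 2 < y2 ^+ 2 by rewrite ltrXn2r ?(ltW y1_gt0) ?(ltW y2_gt0).
have sq_neq : y1 ^+ 2 != y2 ^+ 2 by rewrite lt_eqF.
rewrite (eq_fwd_diff (fun n => inv_mul_partial_fraction
   (lt0r_neq0 (quad_gt0 _ n y1_gt0)) (lt0r_neq0 (quad_gt0 _ n y2_gt0)) sq_neq)).
rewrite -(fwd_diff_morph (fun x => (y2 ^+ 2 - y1 ^+ 2)^-1 * x)) ?fwd_diffB; last first.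
  by move=> a b; rewrite mulrBr.
by rewrite !fwd_diff_inv_quad ?gt_eqF //; ring.
Qed.

Lemma sine_quotient_lt (S1 S2 P1 P2 y1 y2 : R) :
  0 < P1 <= P2 -> 0 < y1 < y2 -> S1 < - (y1 / y2) -> -1 <= S2 ->
  S1 / (P1 * y1) < S2 / (P2 * y2).
Proof.
move=> /andP[P1_gt0 P12] /andP[y1_gt0 y12] S1_lt S2_ge.
have P2_gt0 := lt_le_trans P1_gt0 P12; have y2_gt0 := lt_trans y1_gt0 y12.
apply: (@lt_le_trans _ _ (- (P1 * y2)^-1)).
  rewrite ltr_pdivrMr ?mulr_gt0 // (_ : _ * _ = - (y1 / y2)) //.
  by field; rewrite !lt0r_neq0.
apply: (@le_trans _ _ (- (P2 * y2)^-1)).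
  by rewrite lerN2 lef_pV2 ?posrE ?mulr_gt0 // ler_pM2r.
by rewrite -mulN1r ler_pM2r ?invr_gt0 ?mulr_gt0.
Qed.
End TwoQuadratics.

Theorem mainTheorem7 (R : realType) (r y1 y2 : R)
  (hr : r < 0) (hy1 : 0 < y1) (hy12 : y1 < y2) :
  ~ hausdorff_moment_seq
      (fun n : nat => 1 / ((((n%:R - r) ^+ 2 + y1 ^+ 2) * ((n%:R - r) ^+ 2 + y2 ^+ 2)))).
Proof.
move=> [_ [mu [_ mu_moments]]].
have y2_gt0 := lt_trans hy1 hy12.
have sq_lt : y1 ^+ 2 < y2 ^+ 2 by rewrite ltrXn2r ?ltW.
have [k [j sin_lt]] : exists k j, sin (poch_angle r y1 k j) < - (y1 / y2).
  by apply: exists_poch_angle; rewrite // ltr_pdivrMr // mul1r.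
have := hausdorff_fwd_diff_ge0 mu_moments j k.
rewrite fwd_diff_inv_two_quads // pmulr_rge0 ?mulr_gt0 ?ltr0n ?fact_gt0 ?invr_gt0 ?subr_gt0 //.
by rewrite subr_ge0 leNgt sine_quotient_lt ?hy1 ?hy12 ?sin_geN1 ?poch_norm_gt0 ?le_poch_norm
  ?lt0r_neq0 ?ltW.
Qed.
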